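(* Let $m\ge 3$ and $n\ge 5$ be integers, let $\Gamma=C_m\Box C_n$ with vertex set $\{0,\dots,m-1\}\times\{0,\dots,n-1\}$, and let $S$ be a disjunctive dominating set of $\Gamma$ whose column sequence $x_0,\dots,x_{n-1}$ (where $x_j=|S\cap\{(i,j):0\le i\le m-1\}|$) is proper, i.e. $x_0>0$ and $x_{n-1}=0$. Decompose $x_0,\dots,x_{n-1}$ into its blocks $X_0,\dots,X_{e-1}$, where each block is a maximal run of consecutive terms consisting of $p_i\ge1$ positive terms followed by $q_i\ge 1$ zero terms. Then $q_i\le 3$ for every $i=0,\dots,e-1$.
   Context: $C_k$ denotes the cycle with vertex set $\{0,\dots,k-1\}$, where $i,j$ are adjacent iff $i-j\equiv\pm1\pmod k$. $G\Box H$ is the Cartesian product: vertex set $V(G)\times V(H)$, with $(g,h)\sim(g',h')$ iff either $g=g'$ and $hh'\in E(H)$, or $h=h'$ and $gg'\in E(G)$. For a graph $\Gamma$ and vertex $v$, $\Gamma(v)$ is the set of vertices at distance $1$ from $v$ and $\Gamma_2(v)$ the set at distance exactly $2$. A set $S\subseteq V(\Gamma)$ is a disjunctive dominating set if every vertex $v\notin S$ satisfies $|\Gamma(v)\cap S|\ge 1$ or $|\Gamma_2(v)\cap S|\ge 2$. Blocks: for a sequence with $x_0>0$ and $x_{n-1}=0$, write it uniquely as a concatenation $X_0X_1\cdots X_{e-1}$ where $X_i=(x_{k_i+1},\dots,x_{k_i+p_i},x_{k_i+p_i+1},\dots,x_{k_i+p_i+q_i})$ with $x_{k_i+1},\dots,x_{k_i+p_i}>0$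 and $x_{k_i+p_i+1}=\dots=x_{k_i+p_i+q_i}=0$, $p_i,q_i\ge1$. *)

From mathcomp Require Import all_boot.
Set Implicit Arguments. Unset Strict Implicit. Unset Printing Implicit Defensive.

Definition cyc_adj (k : nat) (i j : nat) : bool :=
  (i == j.+1 %% k) || (j == i.+1 %% k).

Definition box_adj (m n : nat) : rel ('I_m * 'I_n) :=
  fun u v => ((u.1 == v.1) && cyc_adj n u.2 v.2)
          || ((u.2 == v.2) && cyc_adj m u.1 v.1).

Definition within {T : Type} (e : rel T) (k : nat) (u v : T) : Prop :=
  exists s : seq T, size s <= k /\ path e u s /\ last u s = v.

Definition at_dist {T : Type} (e : rel T) (k : nat) (u v : T) : Prop :=
  within e k u v /\ forall k', k' < k -> ~ within e k' u v.

Definition disjunctive_dominating {T : finType} (e : rel T) (S : {set T}) : Prop :=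
  forall v, v \notin S ->
    (exists w, w \in S /\ at_dist e 1 v w) \/
    (exists w1 w2, w1 != w2 /\ w1 \in S /\ w2 \in S /\
                   at_dist e 2 v w1 /\ at_dist e 2 v w2).

Definition col_count (m n : nat) (S : {set 'I_m * 'I_n}) (j : 'I_n) : nat :=
  #|[set i : 'I_m | (i, j) \in S]|.

Definition colseq (m n : nat) (S : {set 'I_m * 'I_n}) : seq nat :=
  [seq col_count S j | j <- enum 'I_n].

(* B = [:: (P_0,Q_0); ...; (P_{e-1},Q_{e-1})] is the block decomposition of s:
   s = P_0 ++ Q_0 ++ ... ++ P_{e-1} ++ Q_{e-1}, each P_i a nonempty run of
   positive terms, each Q_i a nonempty run of zero terms (so p_i = size P_i,
   q_i = size Q_i). *)
Definition block_decomp (s : seq nat) (B : seq (seq nat * seq nat)) : Prop :=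
  s = flatten [seq b.1 ++ b.2 | b <- B] /\
  forall b, b \in B ->
    [/\ 0 < size b.1, 0 < size b.2, all (fun x => 0 < x) b.1
      & all (fun x => x == 0) b.2].

From mathcomp Require Import all_boot.
From mathcomp Require Import zify.

Set Implicit Arguments.
Unset Strict Implicit.
Unset Printing Implicit Defensive.

(* If a block had q >= 4 zeros, say x_k = ... = x_(k+3) = 0, then k >= 1
   because the block starts with a positive term, and k + 3 <= n - 1, so the
   columns k-1, ..., k+3 do not wrap around.  A walk of length l from the vertex
   v = (0, k+1) changes the column by at most l, and by exactly 2 in two steps
   only along row 0.  Hence v has no neighbour in S, and (0, k-1) is the only
   vertex of S within distance 2 of v: v is not disjunctively dominated. *)

Lemma cyc_adj_interior n a b : 0 < a -> a.+1 < n -> b < n ->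
  cyc_adj n a b -> b = a.+1 \/ b.+1 = a.
Proof.
move=> a_gt0 a_lt b_lt; rewrite /cyc_adj (modn_small a_lt).
case/orP=> /eqP a_eq; last by left.
right; have [b1_lt|b1_eq] : b.+1 < n \/ b.+1 = n by lia.
  by rewrite a_eq modn_small.
by move: a_eq; rewrite b1_eq modnn; lia.
Qed.

Lemma box_adj_interior m n (u w : 'I_m * 'I_n) :
  0 < u.2 -> u.2.+1 < n -> box_adj u w ->
  (w.1 = u.1 /\ (w.2 = u.2.+1 :> nat \/ w.2.+1 = u.2)) \/ w.2 = u.2 :> nat.
Proof.
move=> u2_gt0 u2_lt /orP[/andP[/eqP e1 adj2]|/andP[/eqP e2 _]].
  by left; split=> //; exact: cyc_adj_interior (ltn_ord _) adj2.
by rewrite e2; right.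
Qed.

Lemma within_box_adj_col m n l (v w : 'I_m * 'I_n) :
  l <= v.2 -> v.2 + l < n -> within (@box_adj m n) l v w ->
  [/\ v.2 <= w.2 + l, w.2 <= v.2 + l & (w.2 + l = v.2 -> w.1 = v.1)].
Proof.
move=> + + [s [+ [+ <-]]]; elim: s l v => [|a s IH] l v /=.
  by move=> _ _ _ _; split=> //; lia.
case: l => [//|l] l_le l_lt size_s /andP[adj_va walk].
have [v2_gt0 v2_lt] : 0 < v.2 /\ v.2.+1 < n by lia.
have step := box_adj_interior v2_gt0 v2_lt adj_va.
have [l_a lt_a] : l <= a.2 /\ a.2 + l < n by case: step => [[_ []]|]; lia.
have [le1 le2 row] := IH l a l_a lt_a size_s walk.
split; [lia|lia|move=> extreme].
case: step => [[a_row [a_col|a_col]]|a_col]; try lia.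
by rewrite -a_row; apply: row; lia.
Qed.

Lemma col_count_eq0 m n (S : {set 'I_m * 'I_n}) (j : 'I_n) i :
  col_count S j = 0 -> (i, j) \notin S.
Proof.
move/eqP; rewrite cards_eq0 => /eqP col_empty.
by apply/negP => ij_S; have := in_set0 i; rewrite -col_empty inE ij_S.
Qed.

Lemma nth_colseq m n (S : {set 'I_m * 'I_n}) (j : 'I_n) :
  nth 0 (colseq S) j = col_count S j.
Proof.
rewrite /colseq (nth_map j) ?size_enum_ord //.
by congr col_count; apply: val_inj; rewrite /= nth_enum_ord.
Qed.

Lemma size_colseq m n (S : {set 'I_m * 'I_n}) : size (colseq S) = n.
Proof. by rewrite size_map size_enum_ord. Qed.

Lemma block_decomp_infix s B (b : seq nat * seq nat) :
  block_decomp s B -> b \in B ->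
  exists s1 s2, s = s1 ++ b.2 ++ s2 /\ 0 < size s1.
Proof.
case=> -> blocks bB; have [p_gt0 _ _ _] := blocks b bB.
case/splitPr: bB => B1 B2.
exists (flatten [seq c.1 ++ c.2 | c <- B1] ++ b.1),
       (flatten [seq c.1 ++ c.2 | c <- B2]).
by rewrite map_cat flatten_cat /= -!catA size_cat addn_gt0 p_gt0 orbT.
Qed.

Lemma nth_zero_infix (s1 z s2 : seq nat) j :
  all (fun x => x == 0) z -> size s1 <= j < size s1 + size z ->
  nth 0 (s1 ++ z ++ s2) j = 0.
Proof.
move=> /allP z0 /andP[j_ge j_lt].
rewrite nth_cat ltnNge j_ge /= nth_cat ifT; last by lia.
by apply/eqP/z0/mem_nth; rewrite ltn_subLR.
Qed.

Lemma disjunctive_dominating_no_four_empty_cols m n (S : {set 'I_m * 'I_n}) k :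
  disjunctive_dominating (@box_adj m n) S -> 0 < m -> 0 < k -> k + 4 <= n ->
  ~ (forall u : 'I_m * 'I_n, k <= u.2 <= k + 3 -> u \notin S).
Proof.
move=> domS m_gt0 k_gt0 kn empty.
have k1_lt : k.+1 < n by lia.
pose v := (Ordinal m_gt0, Ordinal k1_lt).
have v2 : v.2 = k.+1 :> nat by [].
have near_v l (w : 'I_m * 'I_n) :
    l <= 2 -> w \in S -> within (@box_adj m n) l v w ->
    [/\ l = 2, w.2 + 2 = k.+1 & w.1 = v.1].
  move=> l_le2 wS walk.
  have [||le1 le2 row] := within_box_adj_col _ _ walk; try by rewrite v2; lia.
  rewrite v2 in le1 le2 row.
  have w2_lt : w.2 < k.
    by rewrite ltnNge; apply: contraTN wS => w2_ge; apply: empty; lia.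
  have l2 : l = 2 by lia.
  by subst l; split=> //; [lia|apply: row; lia].
have vS : v \notin S by apply: empty => /=; lia.
case: (domS v vS) => [[w [wS [walk _]]]|[w1 [w2 [w12 [w1S [w2S [[h1 _] [h2 _]]]]]]]].
  by have [] := near_v 1 w isT wS walk.
have [_ e12 e11] := near_v 2 w1 isT w1S h1; have [_ e22 e21] := near_v 2 w2 isT w2S h2.
case/eqP: w12; move: e11 e12 e21 e22.
case: w1 {w1S h1} => a1 b1; case: w2 {w2S h2} => a2 b2 /= -> e12 -> e22.
by congr pair; apply/val_inj/(@addIn 2); rewrite /= e12 e22.
Qed.

Theorem lemma2 (m n : nat) (hm : 3 <= m) (hn : 5 <= n)
  (S : {set 'I_m * 'I_n})
  (hS : disjunctive_dominating (@box_adj m n) S)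
  (hx0 : 0 < nth 0 (colseq S) 0)
  (hxl : nth 0 (colseq S) n.-1 = 0)
  (B : seq (seq nat * seq nat))
  (hB : block_decomp (colseq S) B) :
  forall b, b \in B -> size b.2 <= 3.
Proof.
move=> b bB; rewrite leqNgt; apply/negP => q_gt3.
(* The statement types b.2 through eqType sorts; retyping it at seq nat lets
   lia identify it with the b.2 produced by block_decomp_infix. *)
have q_ge4 : 4 <= size (b : seq nat * seq nat).2 := q_gt3.
have [_ /(_ b bB) [_ _ _ zeros]] := hB.
have [s1 [s2 [cols s1_gt0]]] := block_decomp_infix hB bB.
have := size_colseq S; rewrite cols !size_cat => size_n.
have run j : size s1 <= j <= size s1 + 3 -> nth 0 (colseq S) j = 0.
  by move=> j_in; rewrite cols nth_zero_infix //; lia.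
apply: (disjunctive_dominating_no_four_empty_cols hS _ s1_gt0); [lia|lia|].
by move=> [i j] /= /run; rewrite nth_colseq => /col_count_eq0.
Qed.
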